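(* Let $g$ be an associative algebra equipped with a nondegenerate symmetric bilinear form $\langle\cdot,\cdot\rangle$ satisfying $\langle u v,w\rangle=\langle u,v w\rangle$ for all $u,v,w\in g$. Let $n\ge 1$ and let $\mathbf{g}=g\oplus\cdots\oplus g$ ($n$ copies) with componentwise multiplication and bilinear form $\langle\langle \mathbf{u},\mathbf{v}\rangle\rangle=\sum_{k=1}^n\langle u_k,v_k\rangle$. Let $\mathbf{A}$ be a linear operator on $\mathbf{g}$, written in components as $(\mathbf{A}(\mathbf{u}))_i=\sum_{j=1}^n A_{ij}(u_j)$ with linear operators $A_{ij}$ on $g$, and suppose $\mathbf{A}$ is skew-symmetric, i.e. $A_{ij}^*=-A_{ji}$ for all $i,j$. Let $\alpha$ be a constant. Then $\mathbf{A}$ satisfies mYB$(\mathbf{A};\alpha)$ on $\mathbf{g}$ if and only if all of the following hold: (1) mYB$(A_{jj};\alpha)$ for every $j=1,\dots,n$; (2) Hom$(A_{ij},A_{jj})$ for every $i\neq j$; (3) for every triple $i<j<k$ and all $X,Y\in g$: $[A_{ij}(X),A_{ik}(Y)]=A_{ik}\big([A_{kj}(X),Y]\big)+A_{ij}\big([X,A_{jk}(Y)]\big)$.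
   Context: $[X,Y]=XY-YX$ denotes the commutator (in $\mathbf{g}$ it is taken componentwise). For a linear operator $X$ on $g$, $X^*$ denotes its adjoint with respect to $\langle\cdot,\cdot\rangle$. For a linear operator $R$ on an associative algebra and a constant $\alpha$, the condition mYB$(R;\alpha)$ means $[R(X),R(Y)]=R\big([R(X),Y]+[X,R(Y)]\big)-\alpha[X,Y]$ for all $X,Y$. For linear operators $S,A$, the condition Hom$(S,A)$ means $[S(X),S(Y)]=S\big([A(X),Y]+[X,A(Y)]\big)$ for all $X,Y$. *)

From HB Require Import structures.
From mathcomp Require Import all_boot all_order all_algebra.
Set Implicit Arguments. Unset Strict Implicit. Unset Printing Implicit Defensive.
Import GRing.Theory.
Local Open Scope ring_scope.

Section Defs.
Variables (K : fieldType) (V : lmodType K).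

Definition commr (mul : V -> V -> V) (x y : V) : V := mul x y - mul y x.

Definition mYB (mul : V -> V -> V) (R : V -> V) (alpha : K) : Prop :=
  forall X Y : V,
    commr mul (R X) (R Y)
    = R (commr mul (R X) Y + commr mul X (R Y)) - alpha *: commr mul X Y.

Definition HomCond (mul : V -> V -> V) (S A : V -> V) : Prop :=
  forall X Y : V,
    commr mul (S X) (S Y) = S (commr mul (A X) Y + commr mul X (A Y)).

Definition assoc_bilinear_mul (mul : V -> V -> V) : Prop :=
  (forall a x y z, mul (a *: x + y) z = a *: mul x z + mul y z) /\
  (forall a x y z, mul x (a *: y + z) = a *: mul x y + mul x z) /\
  (forall x y z, mul x (mul y z) = mul (mul x y) z).

Definition invariant_form (mul : V -> V -> V) (B : V -> V -> K) : Prop :=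
  (forall a x y z, B (a *: x + y) z = a * B x z + B y z) /\
  (forall x y, B x y = B y x) /\
  (forall x, (forall y, B x y = 0) -> x = 0) /\
  (forall u v w, B (mul u v) w = B u (mul v w)).
End Defs.

Definition bmul (K : fieldType) (V : lmodType K) (n : nat) (mul : V -> V -> V)
  (u v : {ffun 'I_n -> V}) : {ffun 'I_n -> V} :=
  [ffun i => mul (u i) (v i)].

Definition bop (K : fieldType) (V : lmodType K) (n : nat)
  (A : 'I_n -> 'I_n -> {linear V -> V}) (u : {ffun 'I_n -> V}) : {ffun 'I_n -> V} :=
  [ffun i => \sum_(j < n) A i j (u j)].

(** The i-th component of the mYB defect of the block operator A at (X, Y) is
    the double sum over j, k of a block defect D_ijk(X_j, Y_k), so A satisfies
    mYB iff every D_ijk vanishes.  Skew-symmetry of A and invariance of the form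
    make this family equivariant under permutations of (i, j, k):
    D_ijk(x, y) = - D_ikj(y, x) and <D_ijk(x, y), z> = <D_jki(y, z), x>.  By
    nondegeneracy, whether D_ijk vanishes therefore depends only on the multiset
    {i, j, k}, and conditions (1)-(3) are its vanishing on one representative of
    each orbit. *)

From HB Require Import structures.
From mathcomp Require Import all_boot all_order all_algebra.
From mathcomp Require Import ring.
Import Order.TTheory GRing.Theory.
Local Open Scope ring_scope.

Lemma perm3_closed_total d (T : orderType d) (P : T -> T -> T -> Prop) :
  (forall i j k, P i j k -> P i k j) ->
  (forall i j k, P j k i -> P i j k) ->
  (forall i j, P i j j) ->
  (forall i j k, (i < j)%O -> (j < k)%O -> P i j k) ->
  forall i j k, P i j k.
Proof.
move=> swap23 rot Pijj Plt i j k.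
have swap12 a b c : P b a c -> P a b c by move/swap23/rot.
have rot2 a b c : P c a b -> P a b c by move/rot/rot.
wlog le_ij : i j k / (i <= j)%O.
  move=> H; case: (leP i j) => [/H //|/ltW le_ji].
  by apply: swap12; apply: H.
wlog le_ik : i j k le_ij / (i <= k)%O.
  move=> H; case: (leP i k) => [|lt_ki]; first exact: H.
  by apply: rot2; apply: H; rewrite ltW // (lt_le_trans lt_ki).
wlog le_jk : j k le_ij le_ik / (j <= k)%O.
  move=> H; case: (leP j k) => [|/ltW le_kj]; first exact: H.
  by apply: swap23; apply: H.
move: le_ij le_jk; rewrite !le_eqVlt => /predU1P[<-|lt_ij] /predU1P[<-|lt_jk].
- exact: Pijj.
- exact: rot2.
- exact: Pijj.
- exact: Plt.
Qed.

Section MYBDefect.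
Context {K : fieldType} {V : lmodType K}.
Variable mul : V -> V -> V.

Local Notation "[ x , y ]" := (commr mul x y).

Definition mYB_defect (R : V -> V) (alpha : K) (X Y : V) : V :=
  [R X, R Y] - (R ([R X, Y] + [X, R Y]) - alpha *: [X, Y]).

Lemma mYBP R alpha :
  mYB mul R alpha <-> forall X Y, mYB_defect R alpha X Y = 0.
Proof.
split=> H X Y; first by rewrite /mYB_defect H subrr.
by apply/eqP; rewrite -subr_eq0; apply/eqP; apply: H.
Qed.

End MYBDefect.

Section Commutator.
Context {K : fieldType} {V : lmodType K} {mul : V -> V -> V}.

Local Notation "[ x , y ]" := (commr mul x y).

Lemma commr_antisym x y : [x, y] = - [y, x].
Proof. by rewrite /commr opprB. Qed.

Hypothesis mul_bilin : assoc_bilinear_mul mul.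

Lemma mulDl x y z : mul (x + y) z = mul x z + mul y z.
Proof. by case: mul_bilin => mulZDl _; rewrite -[x]scale1r mulZDl !scale1r. Qed.

Lemma mulDr x y z : mul x (y + z) = mul x y + mul x z.
Proof. by case: mul_bilin => _ [mulZDr _]; rewrite -[y]scale1r mulZDr !scale1r. Qed.

Lemma commrDl x y z : [x + y, z] = [x, z] + [y, z].
Proof. by rewrite /commr mulDl mulDr opprD addrACA. Qed.

Lemma commrDr x y z : [x, y + z] = [x, y] + [x, z].
Proof. by rewrite /commr mulDl mulDr opprD addrACA. Qed.

Lemma commr0l z : [0, z] = 0.
Proof. by apply: (addrI [0, z]); rewrite -commrDl !addr0. Qed.

Lemma commr0r z : [z, 0] = 0.
Proof. by apply: (addrI [z, 0]); rewrite -commrDr !addr0. Qed.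

Lemma commr_suml I (r : seq I) (P : pred I) (F : I -> V) z :
  [\sum_(i <- r | P i) F i, z] = \sum_(i <- r | P i) [F i, z].
Proof. exact: (big_morph (commr mul ^~ z) (fun x y => commrDl x y z) (commr0l z)). Qed.

Lemma commr_sumr I (r : seq I) (P : pred I) (F : I -> V) z :
  [z, \sum_(i <- r | P i) F i] = \sum_(i <- r | P i) [z, F i].
Proof. exact: (big_morph (commr mul z) (commrDr z) (commr0r z)). Qed.

End Commutator.

Section InvariantForm.
Context {K : fieldType} {V : lmodType K} {mul : V -> V -> V} {B : V -> V -> K}.
Hypothesis B_inv : invariant_form mul B.

Lemma formZDl a x y z : B (a *: x + y) z = a * B x z + B y z.
Proof. by case: B_inv => ZDl _; apply: ZDl. Qed.

Lemma formC x y : B x y = B y x.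
Proof. by case: B_inv => _ [sym _]; apply: sym. Qed.

Lemma form_nondegenerate x : (forall y, B x y = 0) -> x = 0.
Proof. by case: B_inv => _ [_ [nondeg _]]; apply: nondeg. Qed.

Lemma formDl x y z : B (x + y) z = B x z + B y z.
Proof. by rewrite -[x]scale1r formZDl mul1r scale1r. Qed.

Lemma form0l z : B 0 z = 0.
Proof. by apply: (addrI (B 0 z)); rewrite -formDl !addr0. Qed.

Lemma formZl a x z : B (a *: x) z = a * B x z.
Proof. by rewrite -[a *: x]addr0 formZDl form0l addr0. Qed.

Lemma formNl x z : B (- x) z = - B x z.
Proof. by rewrite -scaleN1r formZl mulN1r. Qed.

Lemma formBl x y z : B (x - y) z = B x z - B y z.
Proof. by rewrite formDl formNl. Qed.

Lemma form_commr x y z : B (commr mul x y) z = B x (commr mul y z).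
Proof.
have mulA u v w : B (mul u v) w = B u (mul v w).
  by case: B_inv => _ [_ [_ inv]]; apply: inv.
rewrite /commr formBl [RHS]formC formBl !mulA.
by rewrite [B x _]formC mulA [B z _]formC mulA.
Qed.

End InvariantForm.

Section BlockOperator.
Context {K : fieldType} {V : lmodType K} {mul : V -> V -> V} {n : nat}.
Hypothesis mul_bilin : assoc_bilinear_mul mul.
Variables (A : 'I_n -> 'I_n -> {linear V -> V}) (alpha : K).

Local Notation "[ x , y ]" := (commr mul x y).

Definition block_defect i j k x y : V :=
  [A i j x, A i k y] - (A i k [A k j x, y] + A i j [x, A j k y]
                        - alpha *: [x, y] *+ ((i == j) && (i == k))).

Definition block_mYB i j k := forall x y, block_defect i j k x y = 0.

Lemma block_defect_swap i j k x y : block_defect i j k x y = - block_defect i k j y x.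
Proof.
rewrite /block_defect (commr_antisym (A i k y)) (commr_antisym (A j k y)).
rewrite (commr_antisym y (A k j x)) (commr_antisym y x) !linearN /= andbC.
set a := [A i j x, _]; set b := A i k _; set c := A i j _.
by rewrite mulNrn !opprD !opprK [- c - b]addrC.
Qed.

Lemma block_mYB_swap i j k : block_mYB i j k -> block_mYB i k j.
Proof. by move=> D x y; rewrite block_defect_swap D oppr0. Qed.

Lemma block_defect_diag j x y :
  block_defect j j j x y = mYB_defect mul (A j j) alpha x y.
Proof.
by rewrite /block_defect /mYB_defect eqxx /= mulr1n (linearD (A j j) [_, y]).
Qed.

Lemma block_mYB_diag j : block_mYB j j j <-> mYB mul (A j j) alpha.
Proof.
rewrite mYBP /block_mYB.
by split=> D x y; have := D x y; rewrite block_defect_diag.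
Qed.

Lemma block_mYB_offdiag i j k : i != j ->
  block_mYB i j k <->
  forall x y, [A i j x, A i k y] = A i k [A k j x, y] + A i j [x, A j k y].
Proof.
move=> /negbTE nij.
have defectE x y :
    block_defect i j k x y
    = [A i j x, A i k y] - (A i k [A k j x, y] + A i j [x, A j k y]).
  by rewrite /block_defect nij mulr0n subr0.
split=> D x y; first by apply/eqP; rewrite -subr_eq0 -defectE D.
by rewrite defectE D subrr.
Qed.

Lemma block_mYB_hom i j : i != j -> block_mYB i j j <-> HomCond mul (A i j) (A j j).
Proof.
by move/block_mYB_offdiag=> ->; split=> D x y; rewrite D (linearD (A i j) [_, y]).
Qed.

Lemma block_defect0l i j k y : block_defect i j k 0 y = 0.
Proof.
by rewrite /block_defect !(linear0, commr0l mul_bilin, scaler0, mul0rn) !addr0 subrr.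
Qed.

Lemma block_defect0r i j k x : block_defect i j k x 0 = 0.
Proof.
by rewrite /block_defect !(linear0, commr0r mul_bilin, scaler0, mul0rn) !addr0 subrr.
Qed.

Definition embed (j : 'I_n) (x : V) : {ffun 'I_n -> V} := [ffun l => x *+ (l == j)].

Lemma sum_embed {W : zmodType} (F : 'I_n -> V -> W) j x :
  (forall l, F l 0 = 0) -> \sum_l F l (embed j x l) = F j x.
Proof.
move=> F0; rewrite (bigD1 j) //= big1 => [|l /negbTE nlj].
  by rewrite ffunE eqxx mulr1n addr0.
by rewrite ffunE nlj mulr0n F0.
Qed.

Lemma commr_bmulE (u v : {ffun 'I_n -> V}) i : commr (bmul mul) u v i = [u i, v i].
Proof. by rewrite !ffunE. Qed.

Lemma bopE (u : {ffun 'I_n -> V}) i : bop A u i = \sum_(j < n) A i j (u j).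
Proof. by rewrite ffunE. Qed.

Lemma mYB_defect_bop X Y i :
  mYB_defect (bmul mul) (bop A) alpha X Y i
  = \sum_j \sum_k block_defect i j k (X j) (Y k).
Proof.
have addE (f g : {ffun 'I_n -> V}) l : (f + g) l = f l + g l by rewrite !ffunE.
have subE (f g : {ffun 'I_n -> V}) l : (f - g) l = f l - g l by rewrite !ffunE.
have scaleE a (f : {ffun 'I_n -> V}) l : (a *: f) l = a *: f l by rewrite !ffunE.
rewrite /mYB_defect (subE (commr _ _ _)) commr_bmulE (subE (bop A _)) scaleE.
rewrite commr_bmulE !bopE.
have -> : [\sum_j A i j (X j), \sum_k A i k (Y k)]
          = \sum_j \sum_k [A i j (X j), A i k (Y k)].
  rewrite (commr_suml mul_bilin); apply: eq_bigr => j _.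
  by rewrite (commr_sumr mul_bilin).
have -> : \sum_l A i l ((commr (bmul mul) (bop A X) Y + commr (bmul mul) X (bop A Y)) l)
          = \sum_j \sum_k (A i k [A k j (X j), Y k] + A i j [X j, A j k (Y k)]).
  rewrite [RHS](eq_bigr _ (fun j _ => big_split _ _ _ _ _)) big_split /=.
  rewrite [S in _ = S + _]exchange_big -big_split /=; apply: eq_bigr => l _.
  rewrite addE !commr_bmulE !bopE (commr_suml mul_bilin) (commr_sumr mul_bilin).
  by rewrite linearD !linear_sum.
have -> : alpha *: [X i, Y i]
          = \sum_j \sum_k alpha *: [X j, Y k] *+ ((i == j) && (i == k)).
  rewrite (bigD1 i) //= (bigD1 i) //= eqxx mulr1n.
  rewrite big1 => [|k /negbTE nki]; last by rewrite eq_sym nki mulr0n.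
  rewrite big1 ?addr0 // => j /negbTE nji.
  by rewrite big1 // => k _; rewrite [i == j]eq_sym nji /= mulr0n.
apply/esym; rewrite /block_defect.
under eq_bigr => j _ do rewrite sumrB [S in _ - S]sumrB.
by rewrite sumrB [S in _ - S]sumrB.
Qed.

Lemma mYB_blocks : mYB (bmul mul) (bop A) alpha <-> forall i j k, block_mYB i j k.
Proof.
rewrite mYBP; split=> [D i j k x y | D X Y]; last first.
  apply/ffunP => i; rewrite mYB_defect_bop ffunE big1 // => j _.
  by rewrite big1 // => k _; apply: D.
have := congr1 (fun f : {ffun 'I_n -> V} => f i) (D (embed j x) (embed k y)).
rewrite /= mYB_defect_bop ffunE.
rewrite (sum_embed (fun l v => \sum_m block_defect i l m v (embed k y m))); last first.
  by move=> l; rewrite big1 // => m _; apply: block_defect0l.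
by rewrite (sum_embed (block_defect i j ^~ x)) // => m; apply: block_defect0r.
Qed.

Variable B : V -> V -> K.
Hypothesis B_inv : invariant_form mul B.
Hypothesis A_skew : forall i j x y, B (A i j x) y = - B x (A j i y).

Lemma block_defect_rotate i j k x y z :
  B (block_defect i j k x y) z = B (block_defect j k i y z) x.
Proof.
have delta_rot : (i == j) && (i == k) = (j == k) && (j == i).
  by rewrite [j == i]eq_sym; case: eqP => [->|_]; rewrite ?andbT ?andbF.
have first_term : B [A i j x, A i k y] z = - B (A j i [A i k y, z]) x.
  by rewrite (form_commr B_inv) A_skew (formC B_inv).
have second_term : B (A i k [A k j x, y]) z = B (A j k [y, A k i z]) x.
  by rewrite A_skew (form_commr B_inv) A_skew opprK (formC B_inv).
have third_term : B (A i j [x, A j k y]) z = - B [A j k y, A j i z] x.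
  by rewrite A_skew (form_commr B_inv) (formC B_inv).
have alpha_term : B [x, y] z = B [y, z] x by rewrite (form_commr B_inv) (formC B_inv).
rewrite /block_defect -delta_rot.
rewrite (formBl B_inv [A i j x, _]) (formBl B_inv [A j k y, _]) !(formBl B_inv (_ + _)).
rewrite !(formDl B_inv (A _ _ _)) first_term second_term third_term.
case: (_ && _); rewrite ?mulr1n ?mulr0n ?(formZl B_inv) ?(form0l B_inv) ?alpha_term.
all: ring.
Qed.

Lemma block_mYB_rotate i j k : block_mYB j k i -> block_mYB i j k.
Proof.
move=> D x y; apply: (form_nondegenerate B_inv) => z.
by rewrite block_defect_rotate D (form0l B_inv).
Qed.

End BlockOperator.

Theorem proposition3 (K : fieldType) (V : lmodType K)
  (mul : V -> V -> V) (B : V -> V -> K)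
  (Hmul : assoc_bilinear_mul mul) (HB : invariant_form mul B)
  (n : nat) (Hn : (0 < n)%N)
  (A : 'I_n -> 'I_n -> {linear V -> V})
  (Hskew : forall (i j : 'I_n) (x y : V), B (A i j x) y = - B x (A j i y))
  (alpha : K) :
  mYB (bmul mul) (bop A) alpha <->
  [/\ (forall j : 'I_n, mYB mul (A j j) alpha),
      (forall i j : 'I_n, i != j -> HomCond mul (A i j) (A j j)) &
      (forall (i j k : 'I_n), (i < j)%N -> (j < k)%N -> forall X Y : V,
         commr mul (A i j X) (A i k Y)
         = A i k (commr mul (A k j X) Y) + A i j (commr mul X (A j k Y)))].
Proof.
have neq_lt (i j : 'I_n) : (i < j)%N -> i != j.
  by move=> lt_ij; rewrite (lt_eqF (lt_ij : (i < j)%O)).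
apply: (iff_trans (mYB_blocks Hmul A alpha)).
split=> [D | [diag hom tri]].
  split=> [j | i j nij | i j k lt_ij lt_jk].
  - exact/block_mYB_diag/D.
  - exact/(block_mYB_hom A alpha _ _ nij)/D.
  - exact/(block_mYB_offdiag A alpha _ _ _ (neq_lt _ _ lt_ij))/D.
apply: perm3_closed_total => [i j k | i j k | i j | i j k lt_ij lt_jk].
- exact: block_mYB_swap.
- exact: (block_mYB_rotate A alpha B HB Hskew).
- case: (eqVneq i j) => [<-|nij]; first exact/block_mYB_diag/diag.
  exact/(block_mYB_hom A alpha _ _ nij)/hom.
- exact/(block_mYB_offdiag A alpha _ _ _ (neq_lt _ _ lt_ij))/(tri _ _ _ lt_ij lt_jk).
Qed.
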